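(* Let $\Gamma'$ be the rank four incidence system defined in the context from the hemidodecahedron and its Petrie polygons. Then $\Gamma'$ is an incidence geometric representation for the group $A_5\times C_2$ (for which $\mathrm{Inn}(A_5\times C_2)\cong A_5$ and $\mathrm{Aut}(A_5\times C_2)\cong \mathrm{Sym}(5)$).
   Context: An incidence system is a quadruple $\Gamma=(X,*,t,I)$ where $X$ is a set of elements, $I$ a finite set of types, $t:X\to I$ a surjective type function, and $*$ a symmetric binary relation on $X$ (incidence) such that no two elements of the same type are incident. A correlation of $\Gamma$ is a permutation $\alpha$ of $X$ such that for all $x,y\in X$: $t(x)=t(y)\iff t(\alpha(x))=t(\alpha(y))$, and $x*y\iff \alpha(x)*\alpha(y)$. The correlations form a group $\mathrm{Aut}(\Gamma)$; its normal subgroup of type-preserving correlations is $\mathrm{Aut}_I(\Gamma)$. An incidence geometric representation for a group $G$ is an incidence system $\Gamma$ together with isomorphisms $\varphi_1:\mathrm{Inn}(G)\to\mathrm{Aut}_I(\Gamma)$ and $\varphi_2:\mathrm{Aut}(G)\to\mathrm{Aut}(\Gamma)$ with $\varphi_2|_{\mathrm{Inn}(G)}=\varphi_1$. Construction: the hemidodecahedron is the projective polyhedron obtained as the quotient of the regular dodecahedron by its central (antipodal) involution; it has 10 vertices, 15 edges and 6 pentagonal faces, and its vertex–edge graph is the Petersen graph. A Petrie polygon is a closed edge path in which any two consecutive edges, but no three consecutive edges, lie on a common face; the hemidodecahedron has 6 Petrie polygons, each a 5-cycle of the Petersen graph (the Petersen graph has twelve 5-cycles: the 6 faces and the 6 Petrie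 polygons). The elements of $\Gamma'$ of types $0,1,2,3$ are respectively the vertices, the edges, the faces and the Petrie polygons of the hemidodecahedron. Incidence among vertices, edges and faces is as in the hemidodecahedron (containment); a Petrie polygon is incident with the vertices and edges it contains; a face and a Petrie polygon are incident iff they share an edge. Thus the truncation of $\Gamma'$ to types $\{0,1,2\}$ is the hemidodecahedron and the truncation to types $\{0,1,3\}$ is isomorphic to it. *)

From HB Require Import structures.
From mathcomp Require Import all_boot all_fingroup all_solvable.
Set Implicit Arguments. Unset Strict Implicit. Unset Printing Implicit Defensive.
Local Open Scope group_scope.

Section IncidenceSystems.
Variables (X I : finType) (t : X -> I) (inc : rel X).

Definition is_incidence_system : Prop :=
  [/\ forall i : I, exists x : X, t x = i,
      forall x y, inc x y = inc y x &
      forall x y, t x = t y -> ~~ inc x y].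

Definition correlation (a : {perm X}) : bool :=
  [forall x, forall y, ((t x == t y) == (t (a x) == t (a y)))
                       && (inc x y == inc (a x) (a y))].

Definition AutGamma : {set {perm X}} := [set a | correlation a].
Definition AutIGamma : {set {perm X}} :=
  [set a in AutGamma | [forall x, t (a x) == t x]].
End IncidenceSystems.

Definition Inn (gT : finGroupType) (G : {group gT}) : {set {perm gT}} :=
  conj_aut G @* G.

Definition incidence_geometric_representation (gT : finGroupType)
  (G : {group gT}) (X I : finType) (t : X -> I) (inc : rel X) : Prop :=
  is_incidence_system t inc /\
  exists (phi1 phi2 : {perm gT} -> {perm X}),
    [/\ misom (Inn G) (AutIGamma t inc) phi1,
        misom (Aut G) (AutGamma t inc) phi2 &
        {in Inn G, phi2 =1 phi1}].

(* Petersen graph: vertices are the 2-subsets of {0,..,4}, adjacent iff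
   disjoint.  Every 5-cycle of the Petersen graph is the set of edges
   {s k, s (k+1)} of a pentagon (cyclic order s of {0..4}) of K5; the
   parity of s is well defined.  The 6 even ones form one orbit under
   Alt(5) and are taken as the faces of the hemidodecahedron; the 6 odd
   ones are then its Petrie polygons. *)
Definition pvertex (v : {set 'I_5}) : bool := #|v| == 2.

Definition pentagon (s : {perm 'I_5}) : {set {set 'I_5}} :=
  [set [set s k; s (ordS k)] | k : 'I_5].

(* an element is given by its type and its set of Petersen vertices *)
Definition hd_wf (p : 'I_4 * {set {set 'I_5}}) : bool :=
  match val p.1 with
  | 0 => [exists v, pvertex v && (p.2 == [set v])]
  | 1 => [exists v, exists w, [&& pvertex v, pvertex w, [disjoint v & w]
                                & p.2 == [set v; w]]]
  | 2 => [exists s : {perm 'I_5}, ~~ odd_perm s && (p.2 == pentagon s)]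
  | _ => [exists s : {perm 'I_5}, odd_perm s && (p.2 == pentagon s)]
  end.

Definition HDX := {p : 'I_4 * {set {set 'I_5}} | hd_wf p}.

Definition hd_type (x : HDX) : 'I_4 := (val x).1.

Definition share_edge (A B : {set {set 'I_5}}) : bool :=
  [exists v, exists w, [&& pvertex v, pvertex w, [disjoint v & w],
                          [set v; w] \subset A & [set v; w] \subset B]].

Definition hd_inc (x y : HDX) : bool :=
  (hd_type x != hd_type y) &&
  (if (val (hd_type x) >= 2) && (val (hd_type y) >= 2) then
     share_edge (val x).2 (val y).2
   else ((val x).2 \subset (val y).2) || ((val y).2 \subset (val x).2)).

(* The group A5 x C2 (C2 realised as bool under xor) *)
Definition A5xC2 : {group {perm 'I_5} * bool} :=
  [group of setX (Alt 'I_5) [set: bool]].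

From mathcomp Require Import all_boot all_fingroup all_solvable.
Set Implicit Arguments. Unset Strict Implicit. Unset Printing Implicit Defensive.
Local Open Scope group_scope.

(* Sym(5) acts on A5 x C2 by conjugating the first factor, and on Gamma' through its
   action on {0,..,4}: the Petersen vertices are the 2-subsets, adjacent when disjoint,
   and faces and Petrie polygons are the pentagons of even and odd permutations
   respectively, so odd permutations swap these two types.  Both actions are faithful,
   and Alt(5) acts by inner, resp. type-preserving, maps.  Both targets have order at
   most 120: an automorphism of A5 x C2 fixes the central involution and is determined
   by the images of two generators of orders 3 and 5 whose product has order 2, and a
   correlation of Gamma' preserves the vertices and the edges (by the sizes of the type
   classes) and is determined by the images of four suitable vertices.  So both actions
   are onto, and composing one with the inverse of the other gives the representation. *)

(** * Permutations of ['I_5] *)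

Lemma inord5K x : x < 5 -> val (inord x : 'I_5) = x.
Proof. exact: inordK. Qed.

(* Computations on permutations of ['I_5] go through their value lists. *)
Definition pcode (s : {perm 'I_5}) : seq nat :=
  [seq val (s (inord i : 'I_5)) | i <- iota 0 5].
Definition pcomp (p q : seq nat) : seq nat := [seq nth 0 q (nth 0 p i) | i <- iota 0 5].

Lemma nth_pcode s i : i < 5 -> nth 0 (pcode s) i = val (s (inord i)).
Proof. by move=> hi; rewrite /pcode (nth_map 0) ?size_iota // nth_iota. Qed.

Lemma pcodeM s t : pcode (s * t) = pcomp (pcode s) (pcode t).
Proof.
rewrite /pcomp {1}/pcode; apply/eq_in_map => i; rewrite mem_iota /= => hi.
by rewrite permM nth_pcode // nth_pcode ?ltn_ord // inord_val.
Qed.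

Lemma pcode1 : pcode 1 = iota 0 5.
Proof.
rewrite /pcode -{2}(map_id (iota 0 5)); apply/eq_in_map => i.
by rewrite mem_iota /= perm1 => hi; rewrite inord5K.
Qed.

Lemma pcode_inj : injective pcode.
Proof.
move=> s t e; apply/permP => x; apply/val_inj.
by rewrite -[x]inord_val -!nth_pcode // e.
Qed.

Definition all_pcodes : seq (seq nat) := permutations (iota 0 5).

Lemma mem_all_pcodes s : pcode s \in all_pcodes.
Proof.
rewrite mem_permutations; apply: uniq_perm; last 1 first.
- move=> x; rewrite mem_iota /= add0n; apply/mapP/idP => [[i _ ->]|hx].
    exact: ltn_ord.
  exists (val (s^-1 (inord x))); first by rewrite mem_iota /= add0n ltn_ord.
  by rewrite inord_val permKV inord5K.
- rewrite map_inj_in_uniq ?iota_uniq // => i j; rewrite !mem_iota /= !add0n => hi hj.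
  by move/val_inj/perm_inj/(congr1 val); rewrite !inord5K.
- exact: iota_uniq.
Qed.

Definition tperm5 (a b : nat) : {perm 'I_5} := tperm (inord a) (inord b).

Lemma pcode_tperm5 a b : a < 5 -> b < 5 ->
  pcode (tperm5 a b) = [seq if i == a then b else if i == b then a else i | i <- iota 0 5].
Proof.
move=> ha hb; apply/eq_in_map => i; rewrite mem_iota add0n /= => hi.
have eq_inord x y : x < 5 -> y < 5 -> (inord x == inord y :> 'I_5) = (x == y).
  by move=> hx hy; rewrite -(inj_eq val_inj) !inord5K.
by rewrite permE /= !eq_inord //; do 2?case: ifP => _; rewrite inord5K.
Qed.

Lemma odd_tperm5 a b : a < 5 -> b < 5 -> odd_perm (tperm5 a b) = (a != b).
Proof. by move=> ha hb; rewrite odd_tperm -(inj_eq val_inj) !inord5K. Qed.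

(* A 3-cycle and a 5-cycle generating [Alt 'I_5], and a transposition. *)
Definition g3 : {perm 'I_5} := tperm5 0 1 * tperm5 0 2.
Definition g5 : {perm 'I_5} := tperm5 0 2 * tperm5 0 4 * tperm5 0 1 * tperm5 0 3.
Definition tau : {perm 'I_5} := tperm5 0 1.
Definition g3_code : seq nat := [:: 1; 2; 0; 3; 4]%N.
Definition g5_code : seq nat := [:: 2; 3; 4; 0; 1]%N.
Definition tau_code : seq nat := [:: 1; 0; 2; 3; 4]%N.

Lemma pcode_g3 : pcode g3 = g3_code. Proof. by rewrite !pcodeM !pcode_tperm5. Qed.
Lemma pcode_g5 : pcode g5 = g5_code. Proof. by rewrite !pcodeM !pcode_tperm5. Qed.
Lemma pcode_tau : pcode tau = tau_code. Proof. by rewrite !pcode_tperm5. Qed.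
Lemma odd_g3 : odd_perm g3 = false. Proof. by rewrite !odd_permM !odd_tperm5. Qed.
Lemma odd_g5 : odd_perm g5 = false. Proof. by rewrite !odd_permM !odd_tperm5. Qed.
Lemma odd_tau : odd_perm tau. Proof. by rewrite !odd_tperm5. Qed.

Definition word_perm (w : seq bool) : {perm 'I_5} :=
  foldr (fun b s => (if b then g3 else g5) * s) 1 w.
Definition word_code (w : seq bool) : seq nat :=
  foldr (fun b p => pcomp (if b then g3_code else g5_code) p) (iota 0 5) w.

Lemma pcode_word w : pcode (word_perm w) = word_code w.
Proof.
elim: w => [|b w IH] /=; first exact: pcode1.
by rewrite pcodeM IH; case: b; rewrite ?pcode_g3 ?pcode_g5.
Qed.

Lemma odd_word_perm w : odd_perm (word_perm w) = false.
Proof.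
elim: w => [|b w IH] /=; first exact: odd_perm1.
by rewrite odd_permM IH; case: b; rewrite ?odd_g3 ?odd_g5.
Qed.

(* One word in [g3], [g5] for each of the 60 even permutations, found by breadth-first search. *)
Definition extend_words (W : seq (seq bool)) : seq (seq bool) :=
  foldl (fun acc w => if word_code w \in map word_code acc then acc else rcons acc w) W
        [seq b :: w | w <- W, b <- [:: true; false]].
Definition alt_words : seq (seq bool) := Eval vm_compute in iter 12 extend_words [:: [::]].

Lemma all_pcodes_words : all (fun p => (p \in map word_code alt_words) ||
    (p \in map (fun w => pcomp (word_code w) tau_code) alt_words)) all_pcodes.
Proof. by vm_compute. Qed.

Lemma perm_wordP s : exists2 w, w \in alt_words & s = word_perm w \/ s = word_perm w * tau.
Proof.
case/orP: (allP all_pcodes_words _ (mem_all_pcodes s)) => /mapP [w wE e].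
  by exists w => //; left; apply: pcode_inj; rewrite pcode_word.
by exists w => //; right; apply: pcode_inj; rewrite pcodeM pcode_word pcode_tau.
Qed.

Lemma even_perm_word s : ~~ odd_perm s -> exists2 w, w \in alt_words & s = word_perm w.
Proof.
case: (perm_wordP s) => w wE [->|->]; first by exists w.
by rewrite odd_permM odd_word_perm odd_tau.
Qed.

Lemma odd_perm_word s : odd_perm s -> exists2 w, w \in alt_words & s = word_perm w * tau.
Proof. by case: (perm_wordP s) => w wE [e|->]; [rewrite e odd_word_perm | exists w]. Qed.

(** * Automorphisms of [A5xC2] *)

Notation elt := ({perm 'I_5} * bool)%type.

Lemma mul_elt (x y : elt) : x * y = (x.1 * y.1, x.2 * y.2).
Proof. by []. Qed.

Lemma mem_A5xC2 (x : elt) : (x \in A5xC2) = ~~ odd_perm x.1.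
Proof. by case: x => x1 x2; rewrite /A5xC2 /= in_setX Alt_even in_setT andbT. Qed.

Lemma norm_A5xC2 (x : elt) : x \in 'N(A5xC2).
Proof. by apply/normP/setP => y; rewrite mem_conjg !mem_A5xC2 /= odd_permJ. Qed.

Definition autS (s : {perm 'I_5}) : {perm elt} := conj_aut A5xC2 (s, false).

Lemma autSE s x : x \in A5xC2 -> autS s x = (x.1 ^ s, x.2).
Proof. by move=> Gx; rewrite /autS norm_conj_autE ?norm_A5xC2 //; case: x {Gx} => x1 []. Qed.

Lemma autS_Aut s : autS s \in Aut A5xC2.
Proof. exact: Aut_aut. Qed.

Lemma autSM : {morph autS : s t / s * t}.
Proof. by move=> s t; rewrite /autS -conj_aut_morphM ?norm_A5xC2. Qed.

Canonical autS_morphism := @Morphism _ _ [set: {perm 'I_5}] autS (in2W autSM).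

Lemma conj_aut_A5xC2 x : x \in A5xC2 -> conj_aut A5xC2 x = autS x.1.
Proof.
move=> Gx; apply: eq_Aut (autS_Aut _) _ => [|y Gy]; first exact: Aut_aut.
by rewrite conj_autE // autSE //; case: x y {Gx Gy} => [x1 []] [y1 []].
Qed.

Lemma Inn_A5xC2 : Inn A5xC2 = autS @* Alt 'I_5.
Proof.
rewrite /Inn morphimEsub ?normG // morphimEsub ?subsetT //.
apply/setP => a; apply/imsetP/imsetP => [[x Gx ->]|[s Alt_s ->]].
  by exists x.1; [rewrite Alt_even -mem_A5xC2 | exact: conj_aut_A5xC2].
have Gs : (s, false) \in A5xC2 by rewrite mem_A5xC2 -Alt_even.
by exists (s, false) => //; rewrite conj_aut_A5xC2.
Qed.

Definition centralizes_gens_code (p : seq nat) : bool :=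
  (pcomp g3_code p == pcomp p g3_code) && (pcomp g5_code p == pcomp p g5_code).

Lemma commute_g3_g5_codes :
  all (fun p => centralizes_gens_code p ==> (p == iota 0 5)) all_pcodes.
Proof. by vm_compute. Qed.

Lemma commute_g3_g5 s : commute g3 s -> commute g5 s -> s = 1.
Proof.
move=> c3 c5; apply: pcode_inj; apply/eqP; rewrite pcode1.
have /implyP-> // := allP commute_g3_g5_codes _ (mem_all_pcodes s).
by rewrite /centralizes_gens_code -pcode_g3 -pcode_g5 -!pcodeM c3 c5 !eqxx.
Qed.

Definition x3 : elt := (g3, false).
Definition x5 : elt := (g5, false).
Definition z : elt := (1, true).

Lemma x3_A5xC2 : x3 \in A5xC2. Proof. by rewrite mem_A5xC2 odd_g3. Qed.
Lemma x5_A5xC2 : x5 \in A5xC2. Proof. by rewrite mem_A5xC2 odd_g5. Qed.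
Lemma z_A5xC2 : z \in A5xC2. Proof. by rewrite mem_A5xC2 odd_perm1. Qed.

Lemma injm_autS : 'injm autS.
Proof.
apply/subsetP => s; rewrite !inE /= => /eqP autS1.
have fix_conj x : x \in A5xC2 -> commute x.1 s.
  move=> Gx; have := congr1 fst (autSE s Gx); rewrite autS1 perm1 /= conjgE => e.
  by rewrite /commute {2}e mulKVg.
by rewrite (commute_g3_g5 (fix_conj _ x3_A5xC2) (fix_conj _ x5_A5xC2)).
Qed.

Definition word_elt (w : seq bool) : elt := (word_perm w, false).

Lemma word_elt_cons b w : word_elt (b :: w) = (if b then x3 else x5) * word_elt w.
Proof. by case: b. Qed.

Lemma word_elt_A5xC2 w : word_elt w \in A5xC2.
Proof. by rewrite mem_A5xC2 odd_word_perm. Qed.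

Lemma A5xC2_word x : x \in A5xC2 -> exists w, x = word_elt w * (if x.2 then z else 1).
Proof.
rewrite mem_A5xC2 => /even_perm_word[w _ e]; exists w.
by case: x e => x1 [] /= ->; rewrite mul_elt /= mulg1.
Qed.

Section AutA5xC2.
Variable f : {perm elt}.
Hypothesis Af : f \in Aut A5xC2.

Lemma Aut_A5xC2M : {in A5xC2 &, {morph f : x y / x * y}}.
Proof. exact/morphicP/(Aut_morphic Af). Qed.

Lemma Aut_A5xC2_1 : f 1 = 1.
Proof. by apply: (mulgI (f 1)); rewrite -Aut_A5xC2M ?group1 // !mulg1. Qed.

(* [z] generates the centre, which every automorphism preserves. *)
Lemma Aut_fix_z : f z = z.
Proof.
have fG : f @: A5xC2 = A5xC2 by apply: im_perm_on; case/setIdP: Af.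
have [x Gx fx] : exists2 x, x \in A5xC2 & x3 = f x by apply/imsetP; rewrite fG x3_A5xC2.
have [y Gy fy] : exists2 y, y \in A5xC2 & x5 = f y by apply/imsetP; rewrite fG x5_A5xC2.
have z_central u : u \in A5xC2 -> commute (f z) (f u).
  move=> Gu; rewrite /commute -!Aut_A5xC2M ?z_A5xC2 // !mul_elt /= mulg1 mul1g.
  by congr (f (_, _)); case: (u.2 : bool).
have /eqP fz1 : (f z).1 == 1.
  apply/eqP/commute_g3_g5; [move: (z_central _ Gx) | move: (z_central _ Gy)];
  by rewrite -?fx -?fy => /(congr1 fst) /esym.
have : f z != 1 by rewrite -Aut_A5xC2_1 (inj_eq perm_inj); apply/eqP => /(congr1 snd).
by case: (f z) fz1 => a b /= ->; case: b => //; rewrite eqxx.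
Qed.

End AutA5xC2.

Lemma eq_Aut_A5xC2 f g : f \in Aut A5xC2 -> g \in Aut A5xC2 ->
  f x3 = g x3 -> f x5 = g x5 -> f = g.
Proof.
move=> Af Ag fg3 fg5; apply: (eq_Aut Af Ag) => x /A5xC2_word[w ->].
have fg_word : f (word_elt w) = g (word_elt w).
  elim: w => [|b w IH]; first exact: etrans (Aut_A5xC2_1 Af) (esym (Aut_A5xC2_1 Ag)).
  rewrite word_elt_cons !Aut_A5xC2M ?word_elt_A5xC2 ?IH //;
    by case: b; rewrite ?fg3 ?fg5 ?x3_A5xC2 ?x5_A5xC2.
rewrite !Aut_A5xC2M ?word_elt_A5xC2 ?fg_word //; case: x.2; rewrite ?z_A5xC2 ?group1 //.
  by rewrite !Aut_fix_z.
by rewrite !Aut_A5xC2_1.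
Qed.

Definition ecode (x : elt) : seq nat * bool := (pcode x.1, x.2).
Definition ecomp (a b : seq nat * bool) : seq nat * bool := (pcomp a.1 b.1, addb a.2 b.2).
Definition ecode1 : seq nat * bool := (iota 0 5, false).

Lemma ecodeM x y : ecode (x * y) = ecomp (ecode x) (ecode y).
Proof. by rewrite /ecode /= pcodeM. Qed.

Lemma ecode_inj : injective ecode.
Proof.
move=> [x1 x2] [y1 y2] e; have /pcode_inj-> : pcode x1 = pcode y1 := congr1 fst e.
by rewrite (congr1 snd e : x2 = y2).
Qed.

Lemma ecodeX x n : ecode (x ^+ n) = iter n (ecomp (ecode x)) ecode1.
Proof.
elim: n => [|n IH]; first by rewrite expg0 /ecode /= pcode1.
by rewrite expgS ecodeM IH.
Qed.

Definition all_ecodes : seq (seq nat * bool) :=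
  [seq (p, b) | p <- all_pcodes, b <- [:: true; false]].

Lemma mem_all_ecodes x : ecode x \in all_ecodes.
Proof. by apply: allpairs_f; [exact: mem_all_pcodes | case: x.2]. Qed.

Definition order_code (n : nat) (a : seq nat * bool) : bool :=
  (iter n (ecomp a) ecode1 == ecode1) && (a != ecode1).

Lemma order_codeE n x : order_code n (ecode x) = (x ^+ n == 1) && (x != 1).
Proof.
have ecode1E : ecode1 = ecode 1 by rewrite /ecode /= pcode1.
by rewrite /order_code -ecodeX ecode1E !(inj_eq ecode_inj).
Qed.

Lemma order_code_Aut f n x : f \in Aut A5xC2 -> x \in A5xC2 ->
  order_code n (ecode (f x)) = order_code n (ecode x).
Proof.
move=> Af Gx; have fX : f x ^+ n = f (x ^+ n).
  elim: n => [|n IH]; first by rewrite !expg0 Aut_A5xC2_1.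
  by rewrite !expgS IH Aut_A5xC2M ?groupX.
have f_eq1 y : (f y == 1) = (y == 1) by rewrite -{1}(Aut_A5xC2_1 Af) (inj_eq perm_inj).
by rewrite !order_codeE fX !f_eq1.
Qed.

(* Automorphisms of [A5xC2] are determined by the images of [x3] and [x5], which
   are elements of orders 3 and 5 with product of order 2. *)
Definition triangle_pairs : seq ((seq nat * bool) * (seq nat * bool)) :=
  [seq ab <- [seq (a, b) | a <- all_ecodes, b <- all_ecodes]
     | [&& order_code 3 ab.1, order_code 5 ab.2 & order_code 2 (ecomp ab.1 ab.2)]].

Lemma size_triangle_pairs : size triangle_pairs = 120.
Proof. by vm_compute. Qed.

Lemma x3_x5_triangle :
  [&& order_code 3 (ecode x3), order_code 5 (ecode x5) & order_code 2 (ecode (x3 * x5))].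
Proof. by rewrite ecodeM /ecode /= pcode_g3 pcode_g5; vm_compute. Qed.

Lemma card_Aut_A5xC2 : #|Aut A5xC2| <= 120.
Proof.
rewrite -size_triangle_pairs cardE.
pose F (f : {perm elt}) := (ecode (f x3), ecode (f x5)).
rewrite -(size_map F); apply: uniq_leq_size.
  rewrite map_inj_in_uniq ?enum_uniq // => f g; rewrite !mem_enum => Af Ag e.
  exact: eq_Aut_A5xC2 Af Ag (ecode_inj (congr1 fst e)) (ecode_inj (congr1 snd e)).
move=> ab /mapP[f]; rewrite mem_enum => Af ->.
rewrite mem_filter allpairs_f ?mem_all_ecodes // andbT /= -ecodeM -Aut_A5xC2M
  ?x3_A5xC2 ?x5_A5xC2 // !order_code_Aut ?groupM ?x3_A5xC2 ?x5_A5xC2 //.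
exact: x3_x5_triangle.
Qed.

Lemma Aut_A5xC2 : Aut A5xC2 = autS @* Sym 'I_5.
Proof.
apply/eqP; rewrite eq_sym eqEcard; apply/andP; split.
  by apply/subsetP => a /morphimP[s _ _ ->]; apply: autS_Aut.
by rewrite card_injm ?injm_autS ?subsetT // card_Sym card_ord card_Aut_A5xC2.
Qed.

(** * The incidence system *)

Definition tV : 'I_4 := @Ordinal 4 0 isT.
Definition tE : 'I_4 := @Ordinal 4 1 isT.
Definition tF : 'I_4 := @Ordinal 4 2 isT.
Definition tP : 'I_4 := @Ordinal 4 3 isT.

Lemma ord4P (j : 'I_4) : [\/ j = tV, j = tE, j = tF | j = tP].
Proof.
case: j => [[|[|[|[|?]]]] hj] //.
- by constructor 1; apply/val_inj.
- by constructor 2; apply/val_inj.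
- by constructor 3; apply/val_inj.
- by constructor 4; apply/val_inj.
Qed.

Notation pverts x := (val (x : HDX)).2.

Lemma hdXE (x : HDX) : val x = (hd_type x, pverts x).
Proof. by rewrite /hd_type; case: (val x). Qed.

Variant hdX_spec (x : HDX) : Prop :=
 | HdV (v : {set 'I_5}) of hd_type x = tV & #|v| = 2 & pverts x = [set v]
 | HdE (v w : {set 'I_5}) of hd_type x = tE & #|v| = 2 & #|w| = 2 & [disjoint v & w]
     & pverts x = [set v; w]
 | HdF (s : {perm 'I_5}) of hd_type x = tF & ~~ odd_perm s & pverts x = pentagon s
 | HdP (s : {perm 'I_5}) of hd_type x = tP & odd_perm s & pverts x = pentagon s.

Lemma hdXP x : hdX_spec x.
Proof.
case: x => [[[[|[|[|[|i]]]] hi] A]] //= wf; have := wf.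
- by case/existsP => v /andP[/eqP hv /eqP hA]; apply: (@HdV _ v) => //; apply/val_inj.
- case/existsP => v /existsP[w /and4P[/eqP hv /eqP hw hd /eqP hA]].
  by apply: (@HdE _ v w) => //; apply/val_inj.
- by case/existsP => s /andP[hs /eqP hA]; apply: (@HdF _ s) => //; apply/val_inj.
- by case/existsP => s /andP[hs /eqP hA]; apply: (@HdP _ s) => //; apply/val_inj.
Qed.

Lemma neq_ordS (k : 'I_5) : k != ordS k.
Proof. by case: k => [[|[|[|[|[|?]]]]] ?]. Qed.

Lemma card_pentagon_side (s : {perm 'I_5}) k : #|[set s k; s (ordS k)]| = 2.
Proof. by rewrite cards2 (inj_eq perm_inj) neq_ordS. Qed.

Lemma card_pverts x u : u \in pverts x -> #|u| = 2.
Proof.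
case: (hdXP x) => [v _ hv ->|v w _ hv hw _ ->|s _ _ ->|s _ _ ->].
- by move/set1P->.
- by case/set2P=> ->.
- by case/imsetP => k _ ->; apply: card_pentagon_side.
- by case/imsetP => k _ ->; apply: card_pentagon_side.
Qed.

Definition ord5 (n : nat) : 'I_5 := inord n.

Lemma pentagon_two (s : {perm 'I_5}) :
  exists a b, [/\ a \in pentagon s, b \in pentagon s & a != b].
Proof.
exists [set s (ord5 0); s (ordS (ord5 0))], [set s (ord5 1); s (ordS (ord5 1))].
split; try exact: imset_f; apply/eqP => /setP /(_ (s (ord5 0))).
by rewrite !inE eqxx /= !(inj_eq perm_inj) -!(inj_eq val_inj) /= /ord5 !inord5K.
Qed.

Lemma pverts_two x : hd_type x != tV ->
  exists a b, [/\ a \in pverts x, b \in pverts x & a != b].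
Proof.
case: (hdXP x) => [v -> //|v w _ hv hw hd ->|s _ _ ->|s _ _ ->] _; try exact: pentagon_two.
exists v, w; split; rewrite ?inE ?eqxx ?orbT //.
apply/eqP => e; move: hd; rewrite e => /disjoint_setI0; rewrite setIid => w0.
by move: hw; rewrite w0 cards0.
Qed.

Lemma share_edgeC A B : share_edge A B = share_edge B A.
Proof.
by apply/existsP/existsP => -[v /existsP[w /and5P[a b c d e]]];
  exists v; apply/existsP; exists w; rewrite a b c d e.
Qed.

Lemma hd_incC x y : hd_inc x y = hd_inc y x.
Proof.
rewrite /hd_inc eq_sym; congr andb.
by rewrite [X in if X then _ else _]andbC share_edgeC orbC.
Qed.

Lemma hd_inc_vertex x y v : hd_type x = tV -> pverts x = [set v] -> hd_type y != tV ->
  hd_inc x y = (v \in pverts y).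
Proof.
move=> tx sx ty; rewrite /hd_inc tx eq_sym ty /= sx sub1set.
case: (v \in pverts y) => //=; apply/negP => /subsetP sub.
have [a [b [ha hb ab]]] := pverts_two ty.
by move: ab; rewrite (set1P (sub _ ha)) (set1P (sub _ hb)) eqxx.
Qed.

Lemma vertex_wf (v : {set 'I_5}) : #|v| = 2 -> hd_wf (tV, [set v]).
Proof. by move=> hv; apply/existsP; exists v; rewrite /pvertex hv !eqxx. Qed.

Lemma edge_wf (v w : {set 'I_5}) :
  #|v| = 2 -> #|w| = 2 -> [disjoint v & w] -> hd_wf (tE, [set v; w]).
Proof.
move=> hv hw hd; apply/existsP; exists v; apply/existsP; exists w.
by rewrite /pvertex hv hw hd !eqxx.
Qed.

Definition pair01 : {set 'I_5} := [set ord5 0; ord5 1].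

Lemma card_pair01 : #|pair01| = 2.
Proof. by rewrite cards2 -(inj_eq val_inj) /ord5 !inord5K. Qed.

Definition vertex01 : HDX := Sub (tV, [set pair01]) (vertex_wf card_pair01).

Lemma vertex01_type : hd_type vertex01 = tV. Proof. by []. Qed.

Definition mk_vertex (v : {set 'I_5}) : HDX := insubd vertex01 (tV, [set v]).
Definition mk_edge (v w : {set 'I_5}) : HDX := insubd vertex01 (tE, [set v; w]).

Lemma mk_vertexE (v : {set 'I_5}) : #|v| = 2 -> val (mk_vertex v) = (tV, [set v]).
Proof. by move=> hv; rewrite /mk_vertex insubdK //; apply: vertex_wf. Qed.

Lemma mk_edgeE (v w : {set 'I_5}) : #|v| = 2 -> #|w| = 2 -> [disjoint v & w] ->
  val (mk_edge v w) = (tE, [set v; w]).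
Proof. by move=> hv hw hd; rewrite /mk_edge insubdK //; apply: edge_wf. Qed.

Lemma face1_wf : hd_wf (tF, pentagon 1).
Proof. by apply/existsP; exists 1; rewrite odd_perm1 eqxx. Qed.
Definition face1 : HDX := Sub (tF, pentagon 1) face1_wf.

Lemma petrie_tau_wf : hd_wf (tP, pentagon tau).
Proof. by apply/existsP; exists tau; rewrite odd_tau eqxx. Qed.
Definition petrie_tau : HDX := Sub (tP, pentagon tau) petrie_tau_wf.

Definition pair23 : {set 'I_5} := [set ord5 2; ord5 3].

Lemma edge01_23 : hd_type (mk_edge pair01 pair23) = tE.
Proof.
have card23 : #|pair23| = 2 by rewrite cards2 -(inj_eq val_inj) /ord5 !inord5K.
have disj : [disjoint pair01 & pair23].
  by rewrite -setI_eq0; apply/eqP/setP => i; rewrite !inE -!(inj_eq val_inj) /ord5 !inord5K;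
     case: i => [[|[|[|[|[|?]]]]] ?].
by rewrite /hd_type mk_edgeE ?card_pair01.
Qed.

Lemma hd_incidence_system : is_incidence_system hd_type hd_inc.
Proof.
split; last by move=> x y e; rewrite /hd_inc e eqxx.
- by move=> i; case: (ord4P i) => ->; [exists vertex01 | exists (mk_edge pair01 pair23)
                                      | exists face1 | exists petrie_tau]; rewrite ?edge01_23.
- exact: hd_incC.
Qed.

(** * Codes and sizes of the type classes *)

(* Petersen vertices, i.e. 2-subsets of ['I_5], are coded by their sorted element lists. *)
Definition pair_codes : seq (seq nat) :=
  Eval vm_compute in [seq [:: i; j] | i <- iota 0 5, j <- [seq j <- iota 0 5 | i < j]].

Definition set_of_code (p : seq nat) : {set 'I_5} := [set i : 'I_5 | val i \in p].
Definition code_of_set (v : {set 'I_5}) : seq nat := [seq n <- iota 0 5 | inord n \in v].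

Lemma mem_set_of_code i p : (i \in set_of_code p) = (val i \in p).
Proof. by rewrite inE. Qed.

Lemma mem_code_of_set n v : (n \in code_of_set v) = (n < 5) && (inord n \in v).
Proof. by rewrite mem_filter mem_iota /= add0n andbC. Qed.

Lemma code_of_setK v : set_of_code (code_of_set v) = v.
Proof. by apply/setP => i; rewrite mem_set_of_code mem_code_of_set ltn_ord inord_val. Qed.

Lemma code_of_set_inj : injective code_of_set.
Proof. exact: can_inj code_of_setK. Qed.

Lemma pair_codes_sorted : all (fun p => [seq n <- iota 0 5 | n \in p] == p) pair_codes.
Proof. by vm_compute. Qed.

Lemma set_of_codeK p : p \in pair_codes -> code_of_set (set_of_code p) = p.
Proof.
move=> hp; have /eqP {2}<- := allP pair_codes_sorted _ hp.
apply: eq_in_filter => n; rewrite mem_iota /= add0n => hn.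
by rewrite mem_set_of_code inord5K.
Qed.

Lemma size_code_of_set v : size (code_of_set v) = #|v|.
Proof.
have -> : code_of_set v = map val (enum v).
  rewrite /code_of_set -val_enum_ord filter_map /enum_mem; congr map.
  by rewrite -filter_predI; apply: eq_filter => i /=; rewrite inord_val ?andbT.
by rewrite size_map cardE.
Qed.

Lemma code_of_set_pair (v : {set 'I_5}) : #|v| = 2 -> code_of_set v \in pair_codes.
Proof.
move=> h2; have hs : size (code_of_set v) = 2 by rewrite size_code_of_set.
have so : sorted ltn (code_of_set v).
  by apply: sorted_filter; [apply: ltn_trans | apply: iota_ltn_sorted].
have hb n : n \in code_of_set v -> n < 5 by rewrite mem_code_of_set => /andP[].
move: hs so hb; case: (code_of_set v) => [|a [|b [|c l]]] //= _; rewrite andbT => ab hb.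
have : b < 5 by apply: hb; rewrite !inE eqxx orbT.
by case: b ab {hb} => [|[|[|[|[|b]]]]] //; case: a => [|[|[|[|[|a]]]]].
Qed.

Lemma pair_codes_size : all (fun p => size p == 2) pair_codes. Proof. by vm_compute. Qed.
Lemma pair_codes_uniq : uniq pair_codes. Proof. by vm_compute. Qed.
Lemma pair_codes_lt5 : all (all (fun n => n < 5)) pair_codes. Proof. by vm_compute. Qed.

Lemma card_set_of_code p : p \in pair_codes -> #|set_of_code p| = 2.
Proof.
by move=> hp; rewrite -size_code_of_set set_of_codeK //; apply/eqP/(allP pair_codes_size).
Qed.

Lemma eq_set_of_code p v : p \in pair_codes -> (set_of_code p == v) = (p == code_of_set v).
Proof. by move=> hp; apply/eqP/eqP => [<-|->]; rewrite ?set_of_codeK ?code_of_setK. Qed.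

Definition disj_code (a b : seq nat) : bool := all (fun n => n \notin b) a.

Lemma disjoint_set_of_code a b : a \in pair_codes ->
  [disjoint set_of_code a & set_of_code b] = disj_code a b.
Proof.
move=> ha; rewrite disjoint_subset; apply/subsetP/allP => [H n hn|H x].
  have h5 : n < 5 := allP (allP pair_codes_lt5 _ ha) _ hn.
  by have := H (inord n); rewrite !inE inord5K //; apply.
by rewrite !inE => /H.
Qed.

Lemma disjoint_code_of_set (v w : {set 'I_5}) : #|v| = 2 ->
  [disjoint v & w] = disj_code (code_of_set v) (code_of_set w).
Proof. by move=> hv; rewrite -disjoint_set_of_code ?code_of_set_pair // !code_of_setK. Qed.

Definition pvcode (A : {set {set 'I_5}}) : seq (seq nat) :=
  [seq p <- pair_codes | set_of_code p \in A].
Definition hd_code (x : HDX) : nat * seq (seq nat) := (val (hd_type x), pvcode (pverts x)).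

Lemma pvcode_subset (A B : {set {set 'I_5}}) : {in A, forall u : {set 'I_5}, #|u| = 2} ->
  pvcode A = pvcode B -> A \subset B.
Proof.
move=> hA e; apply/subsetP => u hu.
have : code_of_set u \in pvcode A by rewrite mem_filter code_of_setK hu code_of_set_pair ?hA.
by rewrite e mem_filter code_of_setK => /andP[].
Qed.

Lemma hd_code_inj : injective hd_code.
Proof.
move=> x y [/val_inj exy e]; apply: val_inj; rewrite (hdXE x) (hdXE y) exy.
have card2 w : {in pverts w, forall u : {set 'I_5}, #|u| = 2} by move=> u /card_pverts.
congr pair; apply/eqP.
by rewrite eqEsubset (pvcode_subset (card2 x) e) (pvcode_subset (card2 y) (esym e)).
Qed.

Lemma pvcode1 (v : {set 'I_5}) : #|v| = 2 -> pvcode [set v] = [:: code_of_set v].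
Proof.
move=> hv; rewrite /pvcode (eq_in_filter (a2 := pred1 (code_of_set v))).
  by rewrite filter_pred1_uniq ?pair_codes_uniq ?code_of_set_pair.
by move=> p hp; rewrite inE /= eq_set_of_code.
Qed.

Lemma pvcode2 (v w : {set 'I_5}) : #|v| = 2 -> #|w| = 2 ->
  pvcode [set v; w] = [seq p <- pair_codes | (p == code_of_set v) || (p == code_of_set w)].
Proof. by move=> hv hw; apply: eq_in_filter => p hp; rewrite !inE !eq_set_of_code. Qed.

Definition pentagon_code_side (c p : seq nat) : bool :=
  has (fun k => (nth 0 c k \in p) && (nth 0 c (k.+1 %% 5) \in p)) (iota 0 5).

Lemma eq_set2_card (u : {set 'I_5}) a b : #|u| = 2 -> a != b ->
  (u == [set a; b]) = (a \in u) && (b \in u).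
Proof.
move=> hu ab; apply/eqP/andP => [->|[ha hb]]; first by rewrite !inE !eqxx orbT.
apply/eqP; rewrite eq_sym eqEcard hu cards2 ab leqnn andbT.
by apply/subsetP => x; rewrite !inE => /orP[] /eqP->.
Qed.

Lemma inord_ordS (k : 'I_5) : inord (k.+1 %% 5) = ordS k.
Proof. by apply: val_inj; rewrite inord5K ?ltn_pmod. Qed.

Lemma pvcode_pentagon s :
  pvcode (pentagon s) = [seq p <- pair_codes | pentagon_code_side (pcode s) p].
Proof.
apply: eq_in_filter => p hp; rewrite /pentagon_code_side -val_enum_ord has_map.
apply/imsetP/hasP => [[k _ ek]|[k _ /=]].
  exists k; first by rewrite mem_enum.
  rewrite /= !nth_pcode ?ltn_ord ?ltn_pmod // -!mem_set_of_code inord_val inord_ordS.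
  by rewrite ek !inE !eqxx orbT.
rewrite !nth_pcode ?ltn_ord ?ltn_pmod // inord_val inord_ordS -!mem_set_of_code => /andP[h1 h2].
exists k => //; apply/eqP.
by rewrite eq_set2_card ?card_set_of_code ?(inj_eq perm_inj) ?neq_ordS ?h1.
Qed.

Definition of_type (i : 'I_4) : {set HDX} := [set x : HDX | hd_type x == i].

Lemma card_of_type_le i (C : seq (nat * seq (seq nat))) :
  (forall x, hd_type x = i -> hd_code x \in C) -> #|of_type i| <= size (undup C).
Proof.
move=> HC; rewrite cardE -(size_map hd_code); apply: uniq_leq_size.
  by rewrite map_inj_uniq ?enum_uniq //; apply: hd_code_inj.
by move=> c /mapP[x]; rewrite mem_enum inE mem_undup => /eqP /HC hx ->.
Qed.

Lemma card_of_type_ge i (L : seq HDX) : uniq (map hd_code L) ->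
  (forall x, x \in L -> hd_type x = i) -> size L <= #|of_type i|.
Proof.
move=> /map_uniq uL HL; rewrite cardE; apply: uniq_leq_size => // x hx.
by rewrite mem_enum inE HL.
Qed.

Definition vertex_codes := [seq (0, [:: p]) | p <- pair_codes].

Lemma size_vertex_codes : size (undup vertex_codes) = 10. Proof. by vm_compute. Qed.
Lemma vertex_codes_uniq : uniq vertex_codes. Proof. by vm_compute. Qed.

Lemma card_vertices : #|of_type tV| = 10.
Proof.
apply/eqP; rewrite eqn_leq; apply/andP; split.
  rewrite -size_vertex_codes; apply: card_of_type_le => x tx.
  case: (hdXP x); rewrite tx // => v _ hv hS.
  by rewrite /hd_code hS pvcode1 // tx map_f ?code_of_set_pair.
have -> : 10 = size [seq mk_vertex (set_of_code p) | p <- pair_codes] by rewrite size_map.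
apply: card_of_type_ge => [|x /mapP[p hp ->]]; last first.
  by rewrite /hd_type mk_vertexE ?card_set_of_code.
rewrite -map_comp (_ : map _ _ = vertex_codes) ?vertex_codes_uniq //.
apply/eq_in_map => p hp /=.
rewrite /hd_code /hd_type mk_vertexE ?card_set_of_code //=.
by rewrite pvcode1 ?card_set_of_code ?set_of_codeK.
Qed.

Definition edge_pairs : seq (seq nat * seq nat)%type := Eval vm_compute in
  [seq ab <- [seq (a, b) | a <- pair_codes, b <- pair_codes]
     | disj_code ab.1 ab.2 && (index ab.1 pair_codes < index ab.2 pair_codes)].

Lemma edge_pairsP :
  all (fun ab => [&& ab.1 \in pair_codes, ab.2 \in pair_codes & disj_code ab.1 ab.2]) edge_pairs.
Proof. by vm_compute. Qed.

Lemma edge_codes_uniq :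
  uniq [seq (1%N, [seq p <- pair_codes | (p == ab.1) || (p == ab.2)]) | ab <- edge_pairs].
Proof. by vm_compute. Qed.

Lemma size_edge_pairs : size edge_pairs = 15. Proof. by vm_compute. Qed.

Lemma card_edges_ge : 15 <= #|of_type tE|.
Proof.
have edgeP ab : ab \in edge_pairs ->
    [/\ #|set_of_code ab.1| = 2, #|set_of_code ab.2| = 2
       & [disjoint set_of_code ab.1 & set_of_code ab.2]].
  move=> hab; have /and3P[h1 h2 h3] := allP edge_pairsP _ hab.
  by rewrite !card_set_of_code ?disjoint_set_of_code.
rewrite -size_edge_pairs -(size_map (fun ab => mk_edge (set_of_code ab.1) (set_of_code ab.2))).
apply: card_of_type_ge => [|x /mapP[ab /edgeP[h1 h2 h3] ->]]; last by rewrite /hd_type mk_edgeE.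
rewrite -map_comp (_ : map _ _ = [seq (1%N, [seq p <- pair_codes | (p == ab.1) || (p == ab.2)])
                                  | ab <- edge_pairs]) ?edge_codes_uniq //.
apply/eq_in_map => ab hab /=; have /and3P[h1 h2 _] := allP edge_pairsP _ hab.
have [c1 c2 d] := edgeP _ hab.
by rewrite /hd_code /hd_type mk_edgeE //= pvcode2 // !set_of_codeK.
Qed.

Definition face_codes :=
  [seq (2, [seq p <- pair_codes | pentagon_code_side (word_code w) p]) | w <- alt_words].
Definition petrie_codes :=
  [seq (3, [seq p <- pair_codes | pentagon_code_side (pcomp (word_code w) tau_code) p])
  | w <- alt_words].

Lemma size_face_codes : size (undup face_codes) = 6. Proof. by vm_compute. Qed.
Lemma size_petrie_codes : size (undup petrie_codes) = 6. Proof. by vm_compute. Qed.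

Lemma face_petrie_codes : all (fun a => all (fun b => a.2 != b.2) petrie_codes) face_codes.
Proof. by vm_compute. Qed.

Lemma hd_code_face x : hd_type x = tF -> hd_code x \in face_codes.
Proof.
move=> tx; case: (hdXP x); rewrite tx // => s _ /even_perm_word[w hw ->] hS.
rewrite /hd_code hS pvcode_pentagon tx pcode_word.
exact: (map_f (fun w => (2, [seq p <- pair_codes | pentagon_code_side (word_code w) p]))).
Qed.

Lemma hd_code_petrie x : hd_type x = tP -> hd_code x \in petrie_codes.
Proof.
move=> tx; case: (hdXP x); rewrite tx // => s _ /odd_perm_word[w hw ->] hS.
rewrite /hd_code hS pvcode_pentagon tx pcodeM pcode_word pcode_tau.
exact: (map_f (fun w =>
  (3, [seq p <- pair_codes | pentagon_code_side (pcomp (word_code w) tau_code) p]))).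
Qed.

Lemma card_faces_le : #|of_type tF| <= 6.
Proof. by rewrite -size_face_codes; apply: card_of_type_le; apply: hd_code_face. Qed.

Lemma card_petries_le : #|of_type tP| <= 6.
Proof. by rewrite -size_petrie_codes; apply: card_of_type_le; apply: hd_code_petrie. Qed.

Lemma face_neq_petrie x y : hd_type x = tF -> hd_type y = tP -> pverts x <> pverts y.
Proof.
move=> /hd_code_face hx /hd_code_petrie hy e.
by have := allP (allP face_petrie_codes _ hx) _ hy; rewrite /hd_code /= e eqxx.
Qed.

(** * Correlations *)

Notation corr := (correlation hd_type hd_inc).

Section Correlation.
Variable a : {perm HDX}.
Hypothesis corr_a : corr a.

Lemma corr_type x y : (hd_type (a x) == hd_type (a y)) = (hd_type x == hd_type y).
Proof. by have /andP[/eqP-> _] := forallP (forallP corr_a x) y. Qed.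

Lemma corr_inc x y : hd_inc (a x) (a y) = hd_inc x y.
Proof. by have /andP[_ /eqP->] := forallP (forallP corr_a x) y. Qed.

Lemma corrV : corr a^-1.
Proof.
apply/forallP => x; apply/forallP => y.
have := corr_type (a^-1 x) (a^-1 y); have := corr_inc (a^-1 x) (a^-1 y).
by rewrite !permKV => -> ->; rewrite !eqxx.
Qed.

Lemma card_of_type_corr x : #|of_type (hd_type (a x))| = #|of_type (hd_type x)|.
Proof.
rewrite -[RHS](card_imset _ (@perm_inj _ a)); apply: eq_card => y.
apply/idP/imsetP => [hy|[y' hy' ->]]; last by rewrite !inE corr_type in hy' *.
by rewrite inE in hy; exists (a^-1 y); rewrite ?permKV // inE -corr_type permKV.
Qed.

(* Type classes have sizes 10, at least 15, and at most 6, so vertices and edges are fixed. *)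
Lemma corr_vertex x : hd_type x = tV -> hd_type (a x) = tV.
Proof.
move=> tx; have := card_of_type_corr x; rewrite tx card_vertices.
case: (ord4P (hd_type (a x))) => -> // e.
- by move: card_edges_ge; rewrite e.
- by move: card_faces_le; rewrite e.
- by move: card_petries_le; rewrite e.
Qed.

Lemma corr_edge x : hd_type x = tE -> hd_type (a x) = tE.
Proof.
move=> tx; have := card_of_type_corr x; rewrite tx.
case: (ord4P (hd_type (a x))) => e //.
- by have := corr_type x vertex01; rewrite e tx (corr_vertex vertex01_type) vertex01_type.
- by rewrite e => e'; move: card_edges_ge; rewrite -e' => /leq_trans /(_ card_faces_le).
- by rewrite e => e'; move: card_edges_ge; rewrite -e' => /leq_trans /(_ card_petries_le).
Qed.

Lemma corr_vertexE x : (hd_type (a x) == tV) = (hd_type x == tV).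
Proof. by rewrite -{1}(corr_vertex vertex01_type) corr_type vertex01_type. Qed.

Lemma corr_edgeE x : (hd_type (a x) == tE) = (hd_type x == tE).
Proof. by rewrite -{1}(corr_edge edge01_23) corr_type edge01_23. Qed.

End Correlation.

Lemma corrM a b : corr a -> corr b -> corr (a * b).
Proof.
move=> ha hb; apply/forallP => x; apply/forallP => y.
by rewrite !permM !corr_type // !corr_inc // !eqxx.
Qed.

Definition adjacent (x y : HDX) : bool :=
  [exists e, [&& hd_type e == tE, hd_inc x e & hd_inc y e]].

Lemma adjacent_corr a x y : corr a -> adjacent (a x) (a y) = adjacent x y.
Proof.
move=> ha; apply/existsP/existsP => -[e /and3P[h1 h2 h3]].
  by exists (a^-1 e); rewrite -(corr_edgeE ha) -(corr_inc ha x) -(corr_inc ha y) permKV h1 h2 h3.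
by exists (a e); rewrite (corr_edgeE ha) !corr_inc // h1 h2 h3.
Qed.

Definition code_rel (p q : seq nat) : bool * bool := (p == q, disj_code p q).
Definition vertex_rel (x y : HDX) : bool * bool := (x == y, (x != y) && adjacent x y).

Lemma vertex_rel_corr a x y : corr a -> vertex_rel (a x) (a y) = vertex_rel x y.
Proof. by move=> ha; rewrite /vertex_rel (inj_eq perm_inj) adjacent_corr. Qed.

Definition vertex_code (x : HDX) : seq nat := head [::] (pvcode (pverts x)).

Lemma vertexP x : hd_type x = tV -> exists2 v : {set 'I_5}, #|v| = 2 & pverts x = [set v].
Proof. by case: (hdXP x) => [v _ hv hS|v w ->|s ->|s ->] // _; exists v. Qed.

Lemma vertex_codeE x (v : {set 'I_5}) : pverts x = [set v] -> #|v| = 2 ->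
  vertex_code x = code_of_set v.
Proof. by move=> hS hv; rewrite /vertex_code hS pvcode1. Qed.

Lemma vertex_code_pair x : hd_type x = tV -> vertex_code x \in pair_codes.
Proof. by case/vertexP => v hv hS; rewrite (vertex_codeE hS hv) code_of_set_pair. Qed.

Lemma vertex_eq u w v v' : hd_type u = tV -> hd_type w = tV ->
  pverts u = [set v] -> pverts w = [set v'] -> (u == w) = (v == v').
Proof.
move=> tu tw hu hw; apply/eqP/eqP => [e|e]; last first.
  by apply: val_inj; rewrite (hdXE u) (hdXE w) tu tw hu hw e.
by apply/set1P; rewrite -hw -e hu set11.
Qed.

Lemma adjacent_vertices u w v v' : hd_type u = tV -> hd_type w = tV ->
  pverts u = [set v] -> pverts w = [set v'] -> #|v| = 2 -> #|v'| = 2 -> v != v' ->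
  adjacent u w = [disjoint v & v'].
Proof.
move=> tu tw hu hw hv hv' vv'.
have inc_u e : hd_type e = tE -> hd_inc u e = (v \in pverts e).
  by move=> te; rewrite (hd_inc_vertex tu hu) ?te.
have inc_w e : hd_type e = tE -> hd_inc w e = (v' \in pverts e).
  by move=> te; rewrite (hd_inc_vertex tw hw) ?te.
apply/existsP/idP => [[e /and3P[/eqP te]]|hd].
  rewrite inc_u ?inc_w //; case: (hdXP e); rewrite te // => a b _ _ _ hab ->.
  rewrite !inE => /orP[] /eqP e1 /orP[] /eqP e2; move: vv';
    by rewrite e1 e2 ?eqxx // disjoint_sym.
have te : hd_type (mk_edge v v') = tE by rewrite /hd_type mk_edgeE.
exists (mk_edge v v'); rewrite te eqxx inc_u ?inc_w //.
by rewrite mk_edgeE //= !inE !eqxx orbT.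
Qed.

Lemma vertex_code_rel u w : hd_type u = tV -> hd_type w = tV ->
  code_rel (vertex_code u) (vertex_code w) = vertex_rel u w.
Proof.
move=> tu tw; case/vertexP: (tu) => v hv hu; case/vertexP: (tw) => v' hv' hw.
rewrite /code_rel /vertex_rel (vertex_codeE hu hv) (vertex_codeE hw hv').
rewrite (inj_eq code_of_set_inj) -disjoint_code_of_set // (vertex_eq tu tw hu hw).
case: eqP => [<-|/eqP vv'] /=; last by rewrite (adjacent_vertices tu tw hu hw).
congr pair; apply/negP => /disjoint_setI0; rewrite setIid => v0.
by move: hv; rewrite v0 cards0.
Qed.

Lemma eq_vertex_code u w : hd_type u = tV -> hd_type w = tV ->
  (vertex_code u == vertex_code w) = (u == w).
Proof. by move=> tu tw; have /(congr1 fst) := vertex_code_rel tu tw. Qed.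

(* Four vertices whose relations to the ten vertices tell all of them apart. *)
Definition frame_codes : seq (seq nat) := [:: [:: 0; 1]; [:: 2; 3]; [:: 2; 4]; [:: 0; 4]]%N.
Definition frame : seq HDX := [seq mk_vertex (set_of_code p) | p <- frame_codes].

Definition frame_pattern (q : seq nat) : seq (bool * bool) := [seq code_rel q p | p <- frame_codes].

Lemma frame_pattern_injb :
  all (fun p => all (fun q => (frame_pattern p == frame_pattern q) ==> (p == q)) pair_codes)
      pair_codes.
Proof. by vm_compute. Qed.

Lemma frame_codes_pair : all (mem pair_codes) frame_codes. Proof. by vm_compute. Qed.

Lemma frame_vertex l : l \in frame -> hd_type l = tV.
Proof.
case/mapP => p /(allP frame_codes_pair) hp ->.
by rewrite /hd_type mk_vertexE ?card_set_of_code.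
Qed.

Lemma frame_codesE : map vertex_code frame = frame_codes.
Proof.
rewrite -map_comp -[RHS]map_id; apply/eq_in_map => p /(allP frame_codes_pair) hp /=.
rewrite (@vertex_codeE _ (set_of_code p)) ?card_set_of_code ?set_of_codeK //.
by rewrite mk_vertexE ?card_set_of_code.
Qed.

Lemma frame_patternE x : hd_type x = tV ->
  frame_pattern (vertex_code x) = [seq vertex_rel x l | l <- frame].
Proof.
move=> tx; rewrite /frame_pattern -frame_codesE -map_comp; apply/eq_in_map => l hl /=.
exact: vertex_code_rel tx (frame_vertex hl).
Qed.

Section FrameRigidity.
Variable c : {perm HDX}.
Hypotheses (corr_c : corr c) (c_frame : {in frame, c =1 id}).

Lemma corr_fix_frame_vertex x : hd_type x = tV -> c x = x.
Proof.
move=> tx; have tcx := corr_vertex corr_c tx; apply/eqP.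
have /allP/(_ _ (vertex_code_pair tx))/implyP := allP frame_pattern_injb _ (vertex_code_pair tcx).
rewrite eq_vertex_code //; apply.
rewrite !frame_patternE //; apply/eqP/eq_in_map => l hl.
by rewrite -[in LHS](c_frame hl) vertex_rel_corr.
Qed.

Lemma corr_fix_frame_pverts x : pverts (c x) = pverts x.
Proof.
have [/eqP tx|tx] := boolP (hd_type x == tV); first by rewrite corr_fix_frame_vertex.
have tcx : hd_type (c x) != tV by rewrite corr_vertexE.
apply/setP => u; have [/eqP hu|hu] := boolP (#|u| == 2).
  have tv : hd_type (mk_vertex u) = tV by rewrite /hd_type mk_vertexE.
  have sv : pverts (mk_vertex u) = [set u] by rewrite mk_vertexE.
  rewrite -(hd_inc_vertex tv sv tcx) -(hd_inc_vertex tv sv tx).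
  by rewrite -{1}(corr_fix_frame_vertex tv) corr_inc.
by apply/idP/idP => /card_pverts /eqP; rewrite (negbTE hu).
Qed.

(* Faces and Petrie polygons have different vertex sets, so [c] cannot swap them. *)
Lemma corr_fix_frame : c = 1.
Proof.
apply/permP => x; rewrite perm1; apply: val_inj.
rewrite (hdXE (c x)) (hdXE x) corr_fix_frame_pverts; congr pair.
have eV := corr_vertexE corr_c x; have eE := corr_edgeE corr_c x.
have eS := corr_fix_frame_pverts x.
case: (ord4P (hd_type x)) => ex; rewrite ex in eV eE *;
  case: (ord4P (hd_type (c x))) => ec; rewrite ec // in eV eE *.
- by case: (face_neq_petrie ex ec (esym eS)).
- by case: (face_neq_petrie ec ex eS).
Qed.

End FrameRigidity.

Fixpoint code_tuples (n : nat) : seq (seq (seq nat)) :=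
  if n is n'.+1 then [seq p :: t | p <- pair_codes, t <- code_tuples n'] else [:: [::]].

Lemma mem_code_tuples t : all (mem pair_codes) t -> t \in code_tuples (size t).
Proof.
elim: t => [|p t IH] // /andP[hp ht].
change (p :: t \in [seq q :: u | q <- pair_codes, u <- code_tuples (size t)]).
by apply/allpairsP; exists (p, t); split; rewrite /= ?IH.
Qed.

Definition rel_matrix (t : seq (seq nat)) : seq (seq (bool * bool)) :=
  [seq [seq code_rel p q | q <- t] | p <- t].

Lemma eq_rel_matrix_map (T : eqType) (f g : T -> seq nat) (s : seq T) :
  {in s &, forall x y, code_rel (f x) (f y) = code_rel (g x) (g y)} ->
  rel_matrix (map f s) = rel_matrix (map g s).
Proof.
move=> fg; rewrite /rel_matrix -!map_comp; apply/eq_in_map => x hx /=.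
by rewrite -!map_comp; apply/eq_in_map => y hy /=; rewrite fg.
Qed.

Definition frame_images : seq (seq (seq nat)) :=
  [seq t <- code_tuples 4 | rel_matrix t == rel_matrix frame_codes].

Lemma size_frame_images : size frame_images = 120. Proof. by vm_compute. Qed.

Definition frame_image (a : {perm HDX}) : seq (seq nat) := [seq vertex_code (a l) | l <- frame].

Lemma frame_image_inj : {in AutGamma hd_type hd_inc &, injective frame_image}.
Proof.
move=> a b; rewrite !inE => ha hb e.
have ab_frame : {in frame, a =1 b}.
  move=> l hl; apply/eqP; rewrite -eq_vertex_code ?corr_vertex ?frame_vertex //.
  have := congr1 (fun s => nth [::] s (index l frame)) e.
  by rewrite /frame_image !(nth_map vertex01) ?index_mem // nth_index // => ->.
apply/eqP; rewrite eq_mulgV1; apply/eqP.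
by apply: corr_fix_frame => [|l hl]; rewrite ?corrM ?corrV // permM ab_frame ?permK.
Qed.

Lemma mem_frame_images a : corr a -> frame_image a \in frame_images.
Proof.
move=> ha; rewrite mem_filter; apply/andP; split.
  rewrite -frame_codesE (eq_rel_matrix_map (g := vertex_code)) // => l l' hl hl'.
  by rewrite !vertex_code_rel ?(corr_vertex ha) ?frame_vertex // vertex_rel_corr.
have -> : 4 = size (frame_image a) by rewrite size_map.
apply: mem_code_tuples; apply/allP => _ /mapP[l hl ->].
exact: vertex_code_pair (corr_vertex ha (frame_vertex hl)).
Qed.

Lemma card_AutGamma_le : #|AutGamma hd_type hd_inc| <= 120.
Proof.
rewrite -size_frame_images cardE -(size_map frame_image); apply: uniq_leq_size.
  by rewrite map_inj_in_uniq ?enum_uniq // => a b; rewrite !mem_enum; apply: frame_image_inj.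
by move=> t /mapP[a]; rewrite mem_enum inE => ha ->; apply: mem_frame_images.
Qed.

(** * The action of [Sym 'I_5] *)

Definition swap_FP (i : 'I_4) : 'I_4 := if i == tF then tP else if i == tP then tF else i.
Definition type_act (s : {perm 'I_5}) (i : 'I_4) : 'I_4 := if odd_perm s then swap_FP i else i.
Definition pverts_act (s : {perm 'I_5}) (A : {set {set 'I_5}}) : {set {set 'I_5}} :=
  [set s @: (v : {set 'I_5}) | v in A].
Definition hd_act_val (s : {perm 'I_5}) (p : 'I_4 * {set {set 'I_5}}) :=
  (type_act s p.1, pverts_act s p.2).

Lemma swap_FPK : involutive swap_FP.
Proof. by move=> i; case: (ord4P i) => ->. Qed.

Lemma type_act_ge2 s i : (2 <= val (type_act s i)) = (2 <= val i).
Proof. by rewrite /type_act; case: odd_perm => //; case: (ord4P i) => ->. Qed.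

Lemma type_act_inj s : injective (type_act s).
Proof. rewrite /type_act; case: odd_perm => //; exact: (can_inj swap_FPK). Qed.

Lemma imset_permK (s : {perm 'I_5}) (v : {set 'I_5}) : s^-1 @: (s @: v) = v.
Proof. by rewrite -imset_comp -[RHS]imset_id; apply: eq_imset => x /=; rewrite permK. Qed.

Lemma imset_permM (s t : {perm 'I_5}) (v : {set 'I_5}) : (s * t) @: v = t @: (s @: v).
Proof. by rewrite -imset_comp; apply: eq_imset => x /=; rewrite permM. Qed.

Lemma pverts_actK s A : pverts_act s^-1 (pverts_act s A) = A.
Proof.
rewrite /pverts_act -imset_comp -[RHS]imset_id.
by apply: eq_imset => v /=; rewrite imset_permK.
Qed.

Lemma pverts_actM s t A : pverts_act (s * t) A = pverts_act t (pverts_act s A).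
Proof. by rewrite /pverts_act -imset_comp; apply: eq_imset => v /=; rewrite imset_permM. Qed.

Lemma imset_perm2 (s : {perm 'I_5}) (a b : 'I_5) : s @: [set a; b] = [set s a; s b].
Proof. by rewrite imsetU1 imset_set1. Qed.

Lemma pverts_act1 s (v : {set 'I_5}) : pverts_act s [set v] = [set s @: v].
Proof. by rewrite /pverts_act imset_set1. Qed.

Lemma pverts_act2 s (v w : {set 'I_5}) : pverts_act s [set v; w] = [set s @: v; s @: w].
Proof. by rewrite /pverts_act imsetU1 imset_set1. Qed.

Lemma pverts_act_pentagon s t : pverts_act s (pentagon t) = pentagon (t * s).
Proof.
rewrite /pverts_act /pentagon -imset_comp; apply: eq_imset => k /=.
by rewrite imset_perm2 !permM.
Qed.

Lemma card_imset_perm (s : {perm 'I_5}) (v : {set 'I_5}) : #|s @: v| = #|v|.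
Proof. by apply: card_imset; apply: perm_inj. Qed.

Lemma disjoint_imset_perm (s : {perm 'I_5}) (v w : {set 'I_5}) :
  [disjoint s @: v & s @: w] = [disjoint v & w].
Proof.
rewrite -!setI_eq0 -imsetI; last by move=> x y _ _; apply: perm_inj.
apply/eqP/eqP => [e|->]; last by rewrite imset0.
by rewrite -(imset_permK s (v :&: w)) e imset0.
Qed.

Lemma hd_act_wf s (x : HDX) : hd_wf (hd_act_val s (val x)).
Proof.
rewrite (hdXE x) /hd_act_val /=.
case: (hdXP x) => [v -> hv ->|v w -> hv hw hd ->|t -> ht ->|t -> ht ->].
- by rewrite /type_act if_same pverts_act1; apply: vertex_wf; rewrite card_imset_perm.
- rewrite /type_act if_same pverts_act2.
  by apply: edge_wf; rewrite ?card_imset_perm ?disjoint_imset_perm.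
- rewrite pverts_act_pentagon /type_act; case: (boolP (odd_perm s)) => hs /=.
    by apply/existsP; exists (t * s); rewrite odd_permM (negbTE ht) hs eqxx.
  by apply/existsP; exists (t * s); rewrite odd_permM (negbTE ht) (negbTE hs) eqxx.
- rewrite pverts_act_pentagon /type_act; case: (boolP (odd_perm s)) => hs /=.
    by apply/existsP; exists (t * s); rewrite odd_permM ht hs eqxx.
  by apply/existsP; exists (t * s); rewrite odd_permM ht (negbTE hs) eqxx.
Qed.

Definition hd_act_fun s (x : HDX) : HDX := Sub (hd_act_val s (val x)) (hd_act_wf s x).

Lemma hd_act_valK s p : hd_act_val s^-1 (hd_act_val s p) = p.
Proof.
case: p => i A; rewrite /hd_act_val /= pverts_actK /type_act odd_permV.
by case: odd_perm; rewrite ?swap_FPK.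
Qed.

Lemma hd_act_funK s : cancel (hd_act_fun s) (hd_act_fun s^-1).
Proof. by move=> x; apply: val_inj; rewrite /hd_act_fun /= hd_act_valK. Qed.

Lemma hd_act_fun_inj s : injective (hd_act_fun s).
Proof. exact: (can_inj (hd_act_funK s)). Qed.

Definition hd_act s : {perm HDX} := perm (@hd_act_fun_inj s).

Lemma hd_actE s x : val (hd_act s x) = hd_act_val s (val x).
Proof. by rewrite permE. Qed.

Lemma hd_act_type s x : hd_type (hd_act s x) = type_act s (hd_type x).
Proof. by rewrite /hd_type hd_actE. Qed.

Lemma hd_act_pverts s x : pverts (hd_act s x) = pverts_act s (pverts x).
Proof. by rewrite hd_actE. Qed.

Lemma hd_actM s t : hd_act (s * t) = hd_act s * hd_act t.
Proof.
apply/permP => x; apply: val_inj; rewrite permM !hd_actE /hd_act_val /= pverts_actM; congr pair.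
rewrite /type_act odd_permM; case: (odd_perm s); case: (odd_perm t) => //=.
by rewrite swap_FPK.
Qed.

Lemma pverts_act_subset s A B : (pverts_act s A \subset pverts_act s B) = (A \subset B).
Proof.
apply/idP/idP => [h|h]; last by apply: imsetS.
by rewrite -(pverts_actK s A) -(pverts_actK s B); apply: imsetS.
Qed.

Lemma share_edge_act s A B : share_edge A B -> share_edge (pverts_act s A) (pverts_act s B).
Proof.
case/existsP => v /existsP [w /and5P [pv pw d sA sB]].
apply/existsP; exists (s @: v); apply/existsP; exists (s @: w).
rewrite /pvertex in pv pw *.
by rewrite !card_imset_perm pv pw disjoint_imset_perm d -pverts_act2 !pverts_act_subset sA sB.
Qed.

Lemma share_edge_actE s A B : share_edge (pverts_act s A) (pverts_act s B) = share_edge A B.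
Proof.
apply/idP/idP => [h|]; last exact: share_edge_act.
by rewrite -(pverts_actK s A) -(pverts_actK s B); apply: share_edge_act.
Qed.

Lemma hd_act_corr s : corr (hd_act s).
Proof.
apply/forallP => x; apply/forallP => y; apply/andP; split.
  by rewrite !hd_act_type (inj_eq (@type_act_inj s)) eqxx.
rewrite /hd_inc !hd_act_type (inj_eq (@type_act_inj s)) !type_act_ge2 !hd_act_pverts.
by rewrite share_edge_actE !pverts_act_subset eqxx.
Qed.

Lemma ord5_three (i : 'I_5) : exists j k : 'I_5, [/\ i != j, i != k & j != k].
Proof.
case: i => [[|[|[|[|[|?]]]]] hi] //.
- by exists (ord5 1), (ord5 2); rewrite -!(inj_eq val_inj) /= /ord5 !inord5K.
- by exists (ord5 0), (ord5 2); rewrite -!(inj_eq val_inj) /= /ord5 !inord5K.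
- by exists (ord5 0), (ord5 1); rewrite -!(inj_eq val_inj) /= /ord5 !inord5K.
- by exists (ord5 0), (ord5 1); rewrite -!(inj_eq val_inj) /= /ord5 !inord5K.
- by exists (ord5 0), (ord5 1); rewrite -!(inj_eq val_inj) /= /ord5 !inord5K.
Qed.

Lemma hd_act_eq1 s : hd_act s = 1 -> s = 1.
Proof.
move=> e.
have fixv : forall v : {set 'I_5}, #|v| = 2 -> s @: v = v.
  move=> v hv; have h : hd_act s (mk_vertex v) = mk_vertex v by rewrite e perm1.
  have := congr1 (fun x => pverts x) h.
  rewrite hd_act_pverts mk_vertexE // pverts_act1 => /setP /(_ (s @: v)).
  by rewrite !inE eqxx => /esym /eqP.
have m : forall i j : 'I_5, i != j -> s i \in [set i; j].
  move=> i j ij; have h2 : #|[set i; j]| = 2 by rewrite cards2 ij.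
  by rewrite -(fixv _ h2); apply: imset_f; rewrite !inE eqxx.
apply/permP => i; rewrite perm1.
have [j [k [ij ik jk]]] := ord5_three i.
move: (m _ _ ij) (m _ _ ik); rewrite !inE => /orP [/eqP ->|/eqP e1] // /orP [/eqP ->|/eqP e2] //.
by move: jk; rewrite -e1 -e2 eqxx.
Qed.

Lemma hd_act_type_preserving s : [forall x, hd_type (hd_act s x) == hd_type x] = ~~ odd_perm s.
Proof.
apply/forallP/idP => [H|hs x].
  by apply/negP => hs; have := H face1; rewrite hd_act_type /type_act hs.
by rewrite hd_act_type /type_act (negbTE hs).
Qed.

Canonical hd_act_morphism := @Morphism _ _ [set: {perm 'I_5}] hd_act (in2W hd_actM).

Lemma injm_hd_act : 'injm hd_act.
Proof.
apply/subsetP => s; rewrite !inE /= => /eqP hs.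
by rewrite (hd_act_eq1 hs) ?inE.
Qed.

Lemma AutGamma_hd : AutGamma hd_type hd_inc = hd_act @* Sym 'I_5.
Proof.
apply/eqP; rewrite eq_sym eqEcard; apply/andP; split.
  by apply/subsetP => a /morphimP [s _ _ ->]; rewrite inE hd_act_corr.
by rewrite card_injm ?injm_hd_act ?subsetT // card_Sym card_ord card_AutGamma_le.
Qed.

Lemma AutIGamma_hd : AutIGamma hd_type hd_inc = hd_act @* Alt 'I_5.
Proof.
apply/setP => a; rewrite inE AutGamma_hd; apply/andP/idP => [[/morphimP [s _ _ ->] h]|].
  by apply: mem_morphim; [rewrite inE | rewrite Alt_even -hd_act_type_preserving].
case/morphimP => s _ hs ->; split; first by apply: mem_morphim; apply: in_setT.
by rewrite hd_act_type_preserving -Alt_even.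
Qed.

(** * The representation *)

Lemma misom_ifactm (gT aT rT : finGroupType) (D G : {group gT})
    (g : {morphism G >-> rT}) (f : {morphism D >-> aT}) (injf : 'injm f) (H : {set gT}) :
  H \subset D -> H \subset G -> 'injm g -> misom (f @* H) (g @* H) (ifactm g injf).
Proof.
move=> sHD sHG injg; apply/andP; split.
  by apply/morphicP => x y Hx Hy; apply: morphM; exact: subsetP (morphimS f sHG) _ _.
by apply: sub_isom; rewrite ?morphimS ?morphim_ifactm ?injm_ifactm.
Qed.

Theorem mainTheorem4 :
  incidence_geometric_representation A5xC2 hd_type hd_inc
  /\ (Inn A5xC2 \isog Alt 'I_5)%g /\ (Aut A5xC2 \isog Sym 'I_5)%g.
Proof.
have misom_phi H : misom (autS @* H) (hd_act @* H) (ifactm hd_act_morphism injm_autS).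
  by apply: misom_ifactm; rewrite ?subsetT ?injm_hd_act.
split; [|split].
- split; first exact: hd_incidence_system.
  exists (ifactm hd_act_morphism injm_autS), (ifactm hd_act_morphism injm_autS).
  by rewrite Inn_A5xC2 Aut_A5xC2 AutIGamma_hd AutGamma_hd !misom_phi.
- by rewrite Inn_A5xC2 isog_sym sub_isog ?subsetT ?injm_autS.
- by rewrite Aut_A5xC2 isog_sym sub_isog ?subsetT ?injm_autS.
Qed.
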